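(* For a morphism $F:\mathcal C\to\mathcal D$ of cylinder categories, the following are equivalent: (1) $F$ is acyclic; (2) $F$ detects weak equivalences (a morphism $v$ of $\mathcal C$ is a weak equivalence iff $F(v)$ is) and for every object $A$ of $\mathcal C$ the morphism $F_A:\mathcal C(A)\to\mathcal D(F(A))$ is homotopy surjective; (3) $hF:h\mathcal C\to h\mathcal D$ is an equivalence of categories; (4) for every object $A$ of $\mathcal C$, $hF_A:h\mathcal C(A)\to h\mathcal D(F(A))$ is an equivalence of categories.
   Context: A cylinder category is a category $\mathcal C$ with two classes of morphisms, the cofibrations and the weak equivalences (morphisms in both classes are called trivial cofibrations), such that: (1) both classes contain all isomorphisms and are closed under composition; (2) weak equivalences satisfy 2-out-of-6: if $f,g,h$ are composable and $f\circ g$, $g\circ h$ are weak equivalences then $f,g,h,f\circ g\circ h$ are; (3) $\mathcal C$ has an initial object $0$ and every $0\to X$ is a cofibration; (4) pushouts of cofibrations along arbitrary maps exist and are cofibrations; (5) pushouts of trivial cofibrations are trivial cofibrations; (6) for every object $X$ the codiagonal $X\sqcup X\to X$ factors as a cofibration $X\sqcup X\hookrightarrow IX$ followed by a weak equivalence $IX\to X$; (7) every trivial cofibration admits a retraction. A morphism of cylinder categories is a functor preserving cofibrations, weak equivalences, the initial object and pushouts along cofibrations. For a cofibration $A\hookrightarrow B$, a relative cylinder object is a factorization $B\sqcup_A B\hookrightarrow I_AB\xrightarrow{\sim}B$ of the codiagonal into a cofibration followed by a weak equivalence. Two maps $f,g:B\to X$ with $f|_A=g|_A$ are homotopic relative to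 $A$, written $f\sim_A g$, if $(f,g):B\sqcup_AB\to X$ extends to $I_AB\to X$ for some relative cylinder object; homotopy $f\sim g$ is the case $A=0$. $h\mathcal C$ denotes the homotopy category: same objects as $\mathcal C$, morphisms the homotopy classes of morphisms (this is a category and is the localization of $\mathcal C$ at weak equivalences). For an object $A$, $\mathcal C(A)$ is the category whose objects are cofibrations $A\hookrightarrow B$ and morphisms commutative triangles under $A$, with cofibrations and weak equivalences those of $\mathcal C$; it is a cylinder category. A morphism $F$ induces a morphism $F_A:\mathcal C(A)\to\mathcal D(F(A))$ and functors $hF$, $hF_A$ on homotopy categories. $F$ is homotopy surjective if for every object $D$ of $\mathcal D$ there is an object $C$ of $\mathcal C$ and a weak equivalence $D\to F(C)$ (equivalently, $hF$ is essentially surjective). $F$ is homotopy fully faithful if for every cofibration $i:A\hookrightarrow B$ in $\mathcal C$, every arrow $x:A\to X$ in $\mathcal C$, and every $v:F(B)\to F(X)$ in $\mathcal D$ with $v\circ F(i)=F(x)$, there is $v':B\to X$ in $\mathcal C$ with $v'\circ i=x$ and $F(v')\sim_{F(A)} v$. $F$ is acyclic if it is both homotopy surjective and homotopy fully faithful. *)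

From Stdlib Require Import Classical.
Set Implicit Arguments.
Unset Strict Implicit.

Record Cat := {
  Ob :> Type;
  Hom : Ob -> Ob -> Type;
  comp : forall X Y Z, Hom Y Z -> Hom X Y -> Hom X Z;
  idm : forall X, Hom X X;
  comp_assoc : forall W X Y Z (h : Hom W X) (g : Hom X Y) (f : Hom Y Z),
      comp f (comp g h) = comp (comp f g) h;
  comp_id_l : forall X Y (f : Hom X Y), comp (idm Y) f = f;
  comp_id_r : forall X Y (f : Hom X Y), comp f (idm X) = f
}.
Arguments Hom {c} _ _.
Arguments comp {c X Y Z} _ _.
Arguments idm {c} _.

Definition is_iso {C : Cat} {X Y : C} (f : Hom X Y) : Prop :=
  exists g : Hom Y X, comp g f = idm X /\ comp f g = idm Y.

Definition is_pushout {C : Cat} {A B B' P : C} (i : Hom A B) (f : Hom A B')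
    (p1 : Hom B P) (p2 : Hom B' P) : Prop :=
  comp p1 i = comp p2 f /\
  forall (X : C) (h1 : Hom B X) (h2 : Hom B' X), comp h1 i = comp h2 f ->
    exists! h : Hom P X, comp h p1 = h1 /\ comp h p2 = h2.

Definition is_initial {C : Cat} (O : C) : Prop :=
  forall X : C, exists! f : Hom O X, True.

Record CylCat := {
  ccat :> Cat;
  cof : forall X Y : ccat, Hom X Y -> Prop;
  we  : forall X Y : ccat, Hom X Y -> Prop;
  cof_iso : forall X Y (f : Hom X Y), is_iso f -> cof f;
  we_iso : forall X Y (f : Hom X Y), is_iso f -> we f;
  cof_comp : forall X Y Z (g : Hom Y Z) (f : Hom X Y), cof f -> cof g -> cof (comp g f);
  we_comp : forall X Y Z (g : Hom Y Z) (f : Hom X Y), we f -> we g -> we (comp g f);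
  we_2of6 : forall W X Y Z (h : Hom W X) (g : Hom X Y) (f : Hom Y Z),
      we (comp f g) -> we (comp g h) ->
      we f /\ we g /\ we h /\ we (comp f (comp g h));
  zero : ccat;
  init : forall X : ccat, Hom zero X;
  init_unique : forall X (f : Hom zero X), f = init X;
  init_cof : forall X, cof (init X);
  pushout_exists : forall A B B' (i : Hom A B) (f : Hom A B'), cof i ->
      exists (P : ccat) (p1 : Hom B P) (p2 : Hom B' P), is_pushout i f p1 p2;
  pushout_cof : forall A B B' P (i : Hom A B) (f : Hom A B') (p1 : Hom B P)
      (p2 : Hom B' P), cof i -> is_pushout i f p1 p2 -> cof p2;
  pushout_tcof : forall A B B' P (i : Hom A B) (f : Hom A B') (p1 : Hom B P)
      (p2 : Hom B' P), cof i -> we i -> is_pushout i f p1 p2 -> cof p2 /\ we p2;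
  (* (6) cylinder objects: the codiagonal X ⊔ X -> X factors *)
  cylinder : forall X (S : ccat) (i1 i2 : Hom X S),
      is_pushout (init X) (init X) i1 i2 ->
      exists (I : ccat) (c : Hom S I) (p : Hom I X),
        cof c /\ we p /\ comp p (comp c i1) = idm X /\ comp p (comp c i2) = idm X;
  tcof_retract : forall A B (j : Hom A B), cof j -> we j ->
      exists r : Hom B A, comp r j = idm A
}.
Arguments cof {c X Y} _.
Arguments we {c X Y} _.
Arguments zero {c}.
Arguments init {c} _.

(* Homotopy relative to i : A -> B : (f,g) : B ⊔_A B -> X extends to a
   relative cylinder object B ⊔_A B >-> I_A B ~> B. *)
Definition rel_htpy {C : CylCat} {A B X : C} (i : Hom A B) (f g : Hom B X) : Prop :=
  exists (Q : C) (q1 q2 : Hom B Q) (I : C) (c : Hom Q I) (p : Hom I B) (H : Hom I X),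
    is_pushout i i q1 q2 /\ cof c /\ we p /\
    comp p (comp c q1) = idm B /\ comp p (comp c q2) = idm B /\
    comp H (comp c q1) = f /\ comp H (comp c q2) = g.

Definition htpy {C : CylCat} {B X : C} (f g : Hom B X) : Prop :=
  rel_htpy (init B) f g.

Record CylMor (C D : CylCat) := {
  Fo :> C -> D;
  Fh : forall X Y : C, Hom X Y -> Hom (Fo X) (Fo Y);
  F_comp : forall X Y Z (g : Hom Y Z) (f : Hom X Y), Fh (comp g f) = comp (Fh g) (Fh f);
  F_id : forall X, Fh (idm X) = idm (Fo X);
  F_cof : forall X Y (f : Hom X Y), cof f -> cof (Fh f);
  F_we : forall X Y (f : Hom X Y), we f -> we (Fh f);
  F_init : is_initial (Fo zero);
  F_pushout : forall A B B' P (i : Hom A B) (f : Hom A B') (p1 : Hom B P) (p2 : Hom B' P),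
      cof i -> is_pushout i f p1 p2 -> is_pushout (Fh i) (Fh f) (Fh p1) (Fh p2)
}.
Arguments Fh {C D} c {X Y} _.

Definition homotopy_surjective {C D : CylCat} (F : CylMor C D) : Prop :=
  forall Dd : D, exists (Cc : C) (w : Hom Dd (F Cc)), we w.

Definition homotopy_fully_faithful {C D : CylCat} (F : CylMor C D) : Prop :=
  forall (A B X : C) (i : Hom A B) (x : Hom A X) (v : Hom (F B) (F X)),
    cof i -> comp v (Fh F i) = Fh F x ->
    exists v' : Hom B X, comp v' i = x /\ rel_htpy (Fh F i) (Fh F v') v.

Definition acyclic {C D : CylCat} (F : CylMor C D) : Prop :=
  homotopy_surjective F /\ homotopy_fully_faithful F.

Definition detects_we {C D : CylCat} (F : CylMor C D) : Prop :=
  forall (X Y : C) (v : Hom X Y), we v <-> we (Fh F v).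

(* F_A : C(A) -> D(F A) is homotopy surjective: for every object
   (j : F A >-> Dd) of D(F A) there is an object (i : A >-> B) of C(A) and a
   weak equivalence Dd -> F B in D(F A), i.e. a weak equivalence under F A. *)
Definition slice_homotopy_surjective {C D : CylCat} (F : CylMor C D) (A : C) : Prop :=
  forall (Dd : D) (j : Hom (F A) Dd), cof j ->
    exists (B : C) (i : Hom A B), cof i /\
      exists w : Hom Dd (F B), we w /\ comp w j = Fh F i.

(* The homotopy
   category hC has as hom-sets the quotients hom X Y / heq. *)
Record HPre := {
  hob : Type;
  hhom : hob -> hob -> Type;
  hcomp : forall X Y Z, hhom Y Z -> hhom X Y -> hhom X Z;
  hid : forall X, hhom X X;
  heq : forall X Y, hhom X Y -> hhom X Y -> Prop
}.
Arguments hhom {h} _ _.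
Arguments hcomp {h X Y Z} _ _.
Arguments hid {h} _.
Arguments heq {h X Y} _ _.

(* A functor P -> Q (given on representatives) is an equivalence of the
   quotient categories: there is a quasi-inverse G, well defined and
   functorial on classes, with natural isomorphisms 1 ≅ GF and FG ≅ 1. *)
Definition hequiv {P Q : HPre} (Fo : hob P -> hob Q)
    (Fh : forall X Y, hhom X Y -> hhom (Fo X) (Fo Y)) : Prop :=
  exists (Go : hob Q -> hob P) (Gh : forall X Y, hhom X Y -> hhom (Go X) (Go Y))
         (eta : forall X, hhom X (Go (Fo X))) (eta' : forall X, hhom (Go (Fo X)) X)
         (eps : forall Y, hhom (Fo (Go Y)) Y) (eps' : forall Y, hhom Y (Fo (Go Y))),
    (forall X Y (g g' : hhom X Y), heq g g' -> heq (Gh _ _ g) (Gh _ _ g')) /\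
    (forall X Y Z (g : hhom Y Z) (f : hhom X Y),
        heq (Gh _ _ (hcomp g f)) (hcomp (Gh _ _ g) (Gh _ _ f))) /\
    (forall X, heq (Gh _ _ (hid X)) (hid (Go X))) /\
    (forall X Y (f : hhom X Y),
        heq (hcomp (Gh _ _ (Fh _ _ f)) (eta X)) (hcomp (eta Y) f)) /\
    (forall X, heq (hcomp (eta' X) (eta X)) (hid X)) /\
    (forall X, heq (hcomp (eta X) (eta' X)) (hid (Go (Fo X)))) /\
    (forall X Y (g : hhom X Y),
        heq (hcomp g (eps X)) (hcomp (eps Y) (Fh _ _ (Gh _ _ g)))) /\
    (forall Y, heq (hcomp (eps' Y) (eps Y)) (hid (Fo (Go Y)))) /\
    (forall Y, heq (hcomp (eps Y) (eps' Y)) (hid Y)).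

Definition hCat (C : CylCat) : HPre :=
  {| hob := Ob C; hhom := fun X Y => @Hom C X Y;
     hcomp := fun X Y Z g f => comp g f; hid := fun X => idm X;
     heq := fun X Y f g => htpy f g |}.

Definition hF {C D : CylCat} (F : CylMor C D) :
  forall X Y : hob (hCat C), hhom X Y -> @hhom (hCat D) (Fo F X) (Fo F Y) :=
  fun X Y f => Fh F f.

(* h(C(A)): objects are cofibrations A >-> B, morphisms are maps under A,
   identified up to homotopy relative to A (= homotopy in C(A)). *)
Definition uobj {C : CylCat} (A : C) := { B : C & { i : Hom A B | cof i } }.
Definition uhom {C : CylCat} {A : C} (X Y : uobj A) :=
  { u : Hom (projT1 X) (projT1 Y) | comp u (proj1_sig (projT2 X)) = proj1_sig (projT2 Y) }.

Definition ucomp {C : CylCat} {A : C} (X Y Z : uobj A) (g : uhom Y Z) (f : uhom X Y) : uhom X Z.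
Proof.
  exists (comp (proj1_sig g) (proj1_sig f)).
  rewrite <- comp_assoc, (proj2_sig f). exact (proj2_sig g).
Defined.

Definition uid {C : CylCat} {A : C} (X : uobj A) : uhom X X.
Proof. exists (idm (projT1 X)). apply comp_id_l. Defined.

Definition hSlice {C : CylCat} (A : C) : HPre :=
  {| hob := uobj A; hhom := @uhom C A; hcomp := @ucomp C A; hid := @uid C A;
     heq := fun X Y f g => rel_htpy (proj1_sig (projT2 X)) (proj1_sig f) (proj1_sig g) |}.

Definition FA_ob {C D : CylCat} (F : CylMor C D) (A : C) (X : uobj A) : uobj (F A) :=
  existT _ (F (projT1 X))
    (exist _ (Fh F (proj1_sig (projT2 X))) (F_cof F (proj2_sig (projT2 X)))).

Definition FA_hom {C D : CylCat} (F : CylMor C D) (A : C) (X Y : uobj A) (u : uhom X Y) :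
  uhom (FA_ob F X) (FA_ob F Y).
Proof.
  exists (Fh F (proj1_sig u)). simpl.
  rewrite <- F_comp, (proj2_sig u). reflexivity.
Defined.

Definition hFA {C D : CylCat} (F : CylMor C D) (A : C) :
  forall X Y : hob (hSlice A), hhom X Y ->
    @hhom (hSlice (F A)) (FA_ob F X) (FA_ob F Y) :=
  @FA_hom C D F A.

(* Everything rests on Whitehead's theorem for cylinder categories (a map is a weak equivalence
   iff it is a homotopy equivalence) and on homotopy being a congruence, both obtained from
   mapping cylinders and relative cylinders.  Acyclicity of F amounts to hF being essentially
   surjective, full and faithful, which with a choice of homotopy inverses is (3).  Fullness and
   faithfulness give detection of weak equivalences by Whitehead, and homotopy surjectivity of
   each F_A by homotopy extension; conversely, a lift of v : F B -> F X under F A is read off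
   from an object of C(B ⊔_A X) realising a factorization of (v, id).  Finally C(A) is again a
   cylinder category whose homotopy is homotopy relative to A, F_A is acyclic when F is, and
   F_0 is F, so (4) is (3) applied to the F_A. *)

From Stdlib Require Import ClassicalEpsilon ProofIrrelevance.
From Stdlib Require Import Setoid Morphisms.
Set Implicit Arguments.
Unset Strict Implicit.

Local Notation "g ∘ f" := (comp g f) (at level 40, left associativity).

Ltac assoc_r := repeat rewrite <- comp_assoc; repeat rewrite comp_id_l; repeat rewrite comp_id_r.

Lemma comp_rewrite2 {C : Cat} {W X Y Z : C} (f : Hom Y Z) (g : Hom X Y) (h : Hom X Z)
    (k : Hom W X) :
  f ∘ g = h -> f ∘ (g ∘ k) = h ∘ k.
Proof. intros E. rewrite comp_assoc, E. reflexivity. Qed.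

Lemma comp_rewrite3 {C : Cat} {V W X Y Z : C} (f : Hom Y Z) (g : Hom X Y) (h : Hom W X)
    (e : Hom W Z) (k : Hom V W) :
  f ∘ (g ∘ h) = e -> f ∘ (g ∘ (h ∘ k)) = e ∘ k.
Proof. intros E. rewrite <- E, !comp_assoc. reflexivity. Qed.

Lemma comp_rewrite4 {C : Cat} {U V W X Y Z : C} (f : Hom Y Z) (g : Hom X Y) (h : Hom W X)
    (h' : Hom V W) (e : Hom V Z) (k : Hom U V) :
  f ∘ (g ∘ (h ∘ h')) = e -> f ∘ (g ∘ (h ∘ (h' ∘ k))) = e ∘ k.
Proof. intros E. rewrite <- E, !comp_assoc. reflexivity. Qed.

(* [rewrite_comp E] rewrites with a right-nested equation [E : f ∘ (g ∘ ...) = e] also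
   inside longer right-nested composites [f ∘ (g ∘ (... ∘ k))]. *)
Ltac rewrite_comp E :=
  assoc_r;
  first [ rewrite (comp_rewrite4 _ E) | rewrite (comp_rewrite3 _ E)
        | rewrite (comp_rewrite2 _ E) | rewrite E ];
  assoc_r.

Section Pushouts.
Variable C : Cat.

Lemma pushout_commutes {A B B' P : C} (i : Hom A B) (f : Hom A B') (p1 : Hom B P)
    (p2 : Hom B' P) :
  is_pushout i f p1 p2 -> p1 ∘ i = p2 ∘ f.
Proof. intros [E _]; exact E. Qed.

Lemma pushout_sym {A B B' P : C} (i : Hom A B) (f : Hom A B') (p1 : Hom B P) (p2 : Hom B' P) :
  is_pushout i f p1 p2 -> is_pushout f i p2 p1.
Proof.
  intros [E U]. split; [symmetry; exact E|].
  intros X h1 h2 E2. destruct (U X h2 h1 (eq_sym E2)) as [h [[H1 H2] Hu]].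
  exists h. split; [tauto|]. intros h' [? ?]. apply Hu; tauto.
Qed.

Lemma pushout_desc {A B B' P X : C} (i : Hom A B) (f : Hom A B') (p1 : Hom B P)
    (p2 : Hom B' P) (h1 : Hom B X) (h2 : Hom B' X) :
  is_pushout i f p1 p2 -> h1 ∘ i = h2 ∘ f -> exists h : Hom P X, h ∘ p1 = h1 /\ h ∘ p2 = h2.
Proof. intros [_ U] E. destruct (U X _ _ E) as [h [Hh _]]. exists h; exact Hh. Qed.

Lemma pushout_hom_ext {A B B' P X : C} (i : Hom A B) (f : Hom A B') (p1 : Hom B P)
    (p2 : Hom B' P) (h h' : Hom P X) :
  is_pushout i f p1 p2 -> h ∘ p1 = h' ∘ p1 -> h ∘ p2 = h' ∘ p2 -> h = h'.
Proof.
  intros [E U] E1 E2.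
  assert (Ec : (h ∘ p1) ∘ i = (h ∘ p2) ∘ f) by (rewrite <- !comp_assoc, E; reflexivity).
  destruct (U X _ _ Ec) as [k [_ Hk]].
  transitivity k; [symmetry|]; apply Hk; auto.
Qed.

Lemma pushout_paste {A B B' P E Q : C} (i : Hom A B) (f : Hom A B') (g : Hom B P)
    (p2 : Hom B' P) (j : Hom B E) (q1 : Hom E Q) (q2 : Hom P Q) :
  is_pushout i f g p2 -> is_pushout j g q1 q2 -> is_pushout (j ∘ i) f q1 (q2 ∘ p2).
Proof.
  intros Hl Hr. split.
  - rewrite comp_assoc, (pushout_commutes Hr). assoc_r. rewrite (pushout_commutes Hl).
    reflexivity.
  - intros Z h1 h2 Eh. rewrite comp_assoc in Eh.
    destruct (pushout_desc Hl Eh) as [g' [G1 G2]].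
    destruct (pushout_desc Hr (eq_sym G1)) as [h [H1 H2]].
    exists h. split.
    + split; [exact H1|]. rewrite comp_assoc, H2. exact G2.
    + intros h' [K1 K2]. apply (pushout_hom_ext Hr); [rewrite H1, K1; reflexivity|].
      rewrite H2. apply (pushout_hom_ext Hl).
      * rewrite G1, <- comp_assoc, <- (pushout_commutes Hr), comp_assoc, K1. reflexivity.
      * rewrite G2, <- comp_assoc, K2. reflexivity.
Qed.

Lemma pushout_unique_iso {A B B' P P' : C} (i : Hom A B) (f : Hom A B')
    (p1 : Hom B P) (p2 : Hom B' P) (p1' : Hom B P') (p2' : Hom B' P') :
  is_pushout i f p1 p2 -> is_pushout i f p1' p2' ->
  exists phi : Hom P P', phi ∘ p1 = p1' /\ phi ∘ p2 = p2' /\ is_iso phi.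
Proof.
  intros H H'.
  destruct (pushout_desc H (pushout_commutes H')) as [phi [F1 F2]].
  destruct (pushout_desc H' (pushout_commutes H)) as [psi [S1 S2]].
  exists phi. split; [auto|split; [auto|]]. exists psi. split.
  - apply (pushout_hom_ext H); [rewrite_comp F1 | rewrite_comp F2]; auto.
  - apply (pushout_hom_ext H'); [rewrite_comp S1 | rewrite_comp S2]; auto.
Qed.

Lemma pushout_comp_iso {A B B' P P' : C} (i : Hom A B) (f : Hom A B')
    (p1 : Hom B P) (p2 : Hom B' P) (phi : Hom P P') :
  is_pushout i f p1 p2 -> is_iso phi -> is_pushout i f (phi ∘ p1) (phi ∘ p2).
Proof.
  intros H [psi [E1 E2]]. split.
  - assoc_r. rewrite (pushout_commutes H). reflexivity.
  - intros X h1 h2 E. destruct (pushout_desc H E) as [h [H1 H2]].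
    exists (h ∘ psi). split.
    + split; rewrite_comp E1; auto.
    + intros h' [K1 K2].
      assert (Hh : h' ∘ phi = h).
      { apply (pushout_hom_ext H); assoc_r; [rewrite K1, H1 | rewrite K2, H2]; auto. }
      rewrite <- Hh. assoc_r. rewrite E2. assoc_r. reflexivity.
Qed.

End Pushouts.

Section CylinderBasics.
Variable C : CylCat.

Lemma init_hom_eq (X : C) (f g : Hom (@zero C) X) : f = g.
Proof. rewrite (init_unique f), (init_unique g). reflexivity. Qed.

Lemma we_id (X : C) : we (idm X).
Proof. apply we_iso. exists (idm X). rewrite comp_id_l. auto. Qed.

Lemma cof_id (X : C) : cof (idm X).
Proof. apply cof_iso. exists (idm X). rewrite comp_id_l. auto. Qed.

Lemma we_of_comp_l (X Y Z : C) (f : Hom X Y) (g : Hom Y Z) : we (g ∘ f) -> we f -> we g.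
Proof.
  intros Wgf Wf. assert (Wf' : we (f ∘ idm X)) by (rewrite comp_id_r; auto).
  apply (we_2of6 Wgf Wf').
Qed.

Lemma we_of_comp_r (X Y Z : C) (f : Hom X Y) (g : Hom Y Z) : we (g ∘ f) -> we g -> we f.
Proof.
  intros Wgf Wg. assert (Wg' : we (idm Z ∘ g)) by (rewrite comp_id_l; auto).
  apply (we_2of6 Wg' Wgf).
Qed.

Lemma we_section (X Y : C) (s : Hom X Y) (p : Hom Y X) : p ∘ s = idm X -> we p -> we s.
Proof. intros E Wp. apply (we_of_comp_r (g := p)); auto. rewrite E; apply we_id. Qed.

Lemma we_retraction (X Y : C) (s : Hom X Y) (p : Hom Y X) : p ∘ s = idm X -> we s -> we p.
Proof. intros E Ws. apply (we_of_comp_l (f := s)); auto. rewrite E; apply we_id. Qed.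

Lemma pushout_cof_l (A B B' P : C) (i : Hom A B) (f : Hom A B') (p1 : Hom B P)
    (p2 : Hom B' P) :
  cof f -> is_pushout i f p1 p2 -> cof p1.
Proof. intros Hf Hp. exact (pushout_cof Hf (pushout_sym Hp)). Qed.

Lemma coproduct_exists (X Y : C) :
  exists (P : C) (a1 : Hom X P) (a2 : Hom Y P), is_pushout (init X) (init Y) a1 a2.
Proof. apply pushout_exists, init_cof. Qed.

Lemma coproduct_desc (X Y P Z : C) (a1 : Hom X P) (a2 : Hom Y P) (h1 : Hom X Z)
    (h2 : Hom Y Z) :
  is_pushout (init X) (init Y) a1 a2 -> exists h, h ∘ a1 = h1 /\ h ∘ a2 = h2.
Proof. intros Hp. apply (pushout_desc Hp). apply init_hom_eq. Qed.

Lemma coproduct_sum_pushout (X Y XX XY : C) (i1 i2 : Hom X XX) (a1 : Hom X XY)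
    (a2 : Hom Y XY) (f : Hom X Y) (k : Hom XX XY) :
  is_pushout (init X) (init X) i1 i2 -> is_pushout (init X) (init Y) a1 a2 ->
  k ∘ i1 = a1 -> k ∘ i2 = a2 ∘ f -> is_pushout i2 f k a2.
Proof.
  intros Hxx Hxy Hk1 Hk2. split; [exact Hk2|].
  intros Z h1 h2 Eh.
  destruct (coproduct_desc (h1 ∘ i1) h2 Hxy) as [h [Ha1 Ha2]].
  exists h. split.
  - split; [|exact Ha2]. apply (pushout_hom_ext Hxx).
    + rewrite_comp Hk1. exact Ha1.
    + rewrite_comp Hk2. rewrite_comp Ha2. exact (eq_sym Eh).
  - intros h' [K1 K2]. apply (pushout_hom_ext Hxy).
    + rewrite Ha1, <- K1, <- Hk1. assoc_r. reflexivity.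
    + rewrite Ha2, K2. reflexivity.
Qed.

(* [M] is the mapping cylinder [IX ⊔_X Y], built as the pushout of [X ⊔ X >-> IX] along
   [id ⊔ f]. *)
Lemma mapping_cylinder_factorization (X Y : C) (f : Hom X Y) :
  exists (M : C) (j : Hom X M) (p : Hom M Y) (t : Hom Y M),
    cof j /\ we p /\ p ∘ j = f /\ cof t /\ we t /\ p ∘ t = idm Y.
Proof.
  destruct (coproduct_exists X X) as [XX [i1 [i2 Hxx]]].
  destruct (cylinder Hxx) as [I [c [pi [Hc [Hpi [E1 E2]]]]]].
  destruct (coproduct_exists X Y) as [XY [a1 [a2 Hxy]]].
  destruct (coproduct_desc a1 (a2 ∘ f) Hxx) as [k [Hk1 Hk2]].
  destruct (pushout_exists k Hc) as [M [m [n Hm]]].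
  destruct (coproduct_desc f (idm Y) Hxy) as [u [Hu1 Hu2]].
  assert (Epu : (f ∘ pi) ∘ c = u ∘ k).
  { apply (pushout_hom_ext Hxx); assoc_r.
    - rewrite E1. rewrite_comp Hk1. rewrite Hu1. reflexivity.
    - rewrite E2. rewrite_comp Hk2. rewrite_comp Hu2. reflexivity. }
  destruct (pushout_desc Hm Epu) as [p [Hp1 Hp2]].
  pose proof (pushout_paste (coproduct_sum_pushout Hxx Hxy Hk1 Hk2) Hm) as Hcyl.
  assert (Ci2 : cof (c ∘ i2)) by (apply cof_comp; auto; exact (pushout_cof (init_cof _) Hxx)).
  assert (Wi2 : we (c ∘ i2)) by (apply (we_section (p := pi)); auto).
  destruct (pushout_tcof Ci2 Wi2 Hcyl) as [Ct Wt].
  assert (Ept : p ∘ (n ∘ a2) = idm Y) by (rewrite_comp Hp2; exact Hu2).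
  exists M, (n ∘ a1), p, (n ∘ a2). repeat split; auto.
  - apply cof_comp; [exact (pushout_cof_l (init_cof _) Hxy) | exact (pushout_cof Hc Hm)].
  - exact (we_retraction Ept Wt).
  - rewrite_comp Hp2. exact Hu1.
Qed.

Lemma factorization (X Y : C) (f : Hom X Y) :
  exists (M : C) (j : Hom X M) (p : Hom M Y), cof j /\ we p /\ p ∘ j = f.
Proof.
  destruct (mapping_cylinder_factorization f) as [M [j [p [_ [? [? [? _]]]]]]].
  exists M, j, p. auto.
Qed.

End CylinderBasics.

Definition rel_cylinder {C : CylCat} {A B Q I : C} (i : Hom A B) (q1 q2 : Hom B Q)
    (c : Hom Q I) (p : Hom I B) : Prop :=
  is_pushout i i q1 q2 /\ cof c /\ we p /\ p ∘ (c ∘ q1) = idm B /\ p ∘ (c ∘ q2) = idm B.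

Section RelativeHomotopy.
Variable C : CylCat.

Lemma rel_cylinder_exists (A B : C) (i : Hom A B) : cof i ->
  exists (Q I : C) (q1 q2 : Hom B Q) (c : Hom Q I) (p : Hom I B), rel_cylinder i q1 q2 c p.
Proof.
  intros Hi. destruct (pushout_exists i Hi) as [Q [q1 [q2 Hq]]].
  destruct (pushout_desc (h1 := idm B) (h2 := idm B) Hq eq_refl) as [d [D1 D2]].
  destruct (factorization d) as [I [c [p [Hc [Hp E]]]]].
  exists Q, I, q1, q2, c, p. refine (conj Hq (conj Hc (conj Hp (conj _ _))));
    rewrite_comp E; assumption.
Qed.

Lemma rel_htpy_of_cylinder (A B Q I X : C) (i : Hom A B) (q1 q2 : Hom B Q) (c : Hom Q I)
    (p : Hom I B) (H : Hom I X) (f g : Hom B X) :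
  rel_cylinder i q1 q2 c p -> H ∘ (c ∘ q1) = f -> H ∘ (c ∘ q2) = g -> rel_htpy i f g.
Proof. intros [? [? [? [? ?]]]] ? ?. exists Q, q1, q2, I, c, p, H. tauto. Qed.

(* A homotopy relative to [i] can be transported along a map of cofibrations
   [(a, u) : i' -> i] to any chosen cylinder for [i']: compare the two cylinders through a
   pushout, factor the comparison, and retract the resulting trivial cofibration. *)
Lemma rel_htpy_transport (A B A' B' X : C) (i : Hom A B) (i' : Hom A' B') (u : Hom B' B)
    (a : Hom A' A) (f g : Hom B X) (Q' I' : C) (q1' q2' : Hom B' Q') (c' : Hom Q' I')
    (p' : Hom I' B') :
  u ∘ i' = i ∘ a -> rel_htpy i f g -> rel_cylinder i' q1' q2' c' p' ->
  exists H' : Hom I' X, H' ∘ (c' ∘ q1') = f ∘ u /\ H' ∘ (c' ∘ q2') = g ∘ u.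
Proof.
  intros Eu [Q [q1 [q2 [I [c [p [H [Hq [Hc [Hp [Ep1 [Ep2 [Ef Eg]]]]]]]]]]]]]
    [Hq' [Hc' [Hp' [Ep1' Ep2']]]].
  destruct (pushout_desc (h1 := q1 ∘ u) (h2 := q2 ∘ u) Hq') as [psi [Ps1 Ps2]].
  { assoc_r. rewrite Eu, comp_assoc, (pushout_commutes Hq). assoc_r. reflexivity. }
  destruct (pushout_exists (c ∘ psi) Hc') as [N [n1 [n2 Hn]]].
  pose proof (pushout_cof Hc' Hn) as Hn2.
  destruct (pushout_desc (h1 := u ∘ p') (h2 := p) Hn) as [nu [Nu1 Nu2]].
  { apply (pushout_hom_ext Hq'); assoc_r.
    - rewrite Ep1'. rewrite_comp Ps1. rewrite_comp Ep1. reflexivity.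
    - rewrite Ep2'. rewrite_comp Ps2. rewrite_comp Ep2. reflexivity. }
  destruct (factorization nu) as [M [k [pm [Hk [Hpm Ek]]]]].
  assert (Hw : we (k ∘ n2)).
  { apply (we_of_comp_r (g := pm)); auto. rewrite comp_assoc, Ek, Nu2. auto. }
  destruct (tcof_retract (cof_comp Hn2 Hk) Hw) as [r Hr].
  exists (H ∘ (r ∘ (k ∘ n1))). assoc_r. split.
  - rewrite_comp (pushout_commutes Hn). rewrite_comp Hr. rewrite_comp Ps1. rewrite_comp Ef.
    reflexivity.
  - rewrite_comp (pushout_commutes Hn). rewrite_comp Hr. rewrite_comp Ps2. rewrite_comp Eg.
    reflexivity.
Qed.

Lemma rel_htpy_precomp (A B A' B' X : C) (i : Hom A B) (i' : Hom A' B') (u : Hom B' B)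
    (a : Hom A' A) (f g : Hom B X) :
  cof i' -> u ∘ i' = i ∘ a -> rel_htpy i f g -> rel_htpy i' (f ∘ u) (g ∘ u).
Proof.
  intros Hi' Eu Hfg. destruct (rel_cylinder_exists Hi') as [Q [I [q1 [q2 [c [p Hr]]]]]].
  destruct (rel_htpy_transport Eu Hfg Hr) as [H [E1 E2]].
  exact (rel_htpy_of_cylinder Hr E1 E2).
Qed.

Lemma rel_htpy_postcomp (A B X Y : C) (i : Hom A B) (f g : Hom B X) (h : Hom X Y) :
  rel_htpy i f g -> rel_htpy i (h ∘ f) (h ∘ g).
Proof.
  intros [Q [q1 [q2 [I [c [p [H [Hq [Hc [Hp [Ep1 [Ep2 [Ef Eg]]]]]]]]]]]]].
  exists Q, q1, q2, I, c, p, (h ∘ H). do 5 (split; [assumption|]).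
  split; assoc_r; [rewrite Ef | rewrite Eg]; reflexivity.
Qed.

Lemma rel_htpy_refl (A B X : C) (i : Hom A B) (f : Hom B X) : cof i -> rel_htpy i f f.
Proof.
  intros Hi. destruct (rel_cylinder_exists Hi) as [Q [I [q1 [q2 [c [p Hr]]]]]].
  apply (rel_htpy_of_cylinder (H := f ∘ p) Hr); destruct Hr as [_ [_ [_ [E1 E2]]]];
    assoc_r; [rewrite E1 | rewrite E2]; assoc_r; reflexivity.
Qed.

Lemma rel_htpy_sym (A B X : C) (i : Hom A B) (f g : Hom B X) :
  rel_htpy i f g -> rel_htpy i g f.
Proof.
  intros [Q [q1 [q2 [I [c [p [H [Hq [Hc [Hp [Ep1 [Ep2 [Ef Eg]]]]]]]]]]]]].
  exists Q, q2, q1, I, c, p, H. pose proof (pushout_sym Hq). tauto.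
Qed.

(* Transport both homotopies to one cylinder [I] and glue two copies of it along the trivial
   cofibration [c ∘ q2]. *)
Lemma rel_htpy_trans (A B X : C) (i : Hom A B) (f g h : Hom B X) : cof i ->
  rel_htpy i f g -> rel_htpy i g h -> rel_htpy i f h.
Proof.
  intros Hi H1 H2. destruct (rel_cylinder_exists Hi) as [Q [I [q1 [q2 [c [p Hr]]]]]].
  assert (Eid : idm B ∘ i = i ∘ idm A) by (rewrite comp_id_l, comp_id_r; reflexivity).
  destruct (rel_htpy_transport Eid H1 Hr) as [K1 [E11 E12]].
  destruct (rel_htpy_transport Eid H2 Hr) as [K2 [E21 E22]].
  rewrite comp_id_r in E11, E12, E21, E22.
  pose proof Hr as [Hq [Hc [Hp [Ep1 Ep2]]]].
  assert (Cq2 : cof (c ∘ q2)) by (apply cof_comp; auto; exact (pushout_cof Hi Hq)).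
  assert (Wq2 : we (c ∘ q2)) by (apply (we_section (p := p)); auto).
  destruct (pushout_exists (c ∘ q1) Cq2) as [N [n1 [n2 Hn]]].
  destruct (pushout_tcof Cq2 Wq2 Hn) as [_ Wn2].
  destruct (pushout_desc (h1 := K1) (h2 := K2) Hn) as [K [Ka Kb]].
  { rewrite E12, E21. reflexivity. }
  destruct (pushout_desc (h1 := p) (h2 := p) Hn) as [nu [Nu1 Nu2]].
  { rewrite Ep1, Ep2. reflexivity. }
  destruct (pushout_desc (h1 := n1 ∘ (c ∘ q1)) (h2 := n2 ∘ (c ∘ q2)) Hq) as [phi [Ph1 Ph2]].
  { assoc_r. rewrite (pushout_commutes Hq). rewrite_comp (pushout_commutes Hn).
    rewrite (pushout_commutes Hq). reflexivity. }
  destruct (factorization phi) as [M [al [be [Hal [Hbe Eab]]]]].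
  assert (Wnu : we nu) by (apply (we_of_comp_l (f := n2)); auto; rewrite Nu2; auto).
  apply (rel_htpy_of_cylinder (q1 := q1) (q2 := q2) (c := al) (p := nu ∘ be) (H := K ∘ be)).
  - refine (conj Hq (conj Hal (conj (we_comp Hbe Wnu) (conj _ _)))); rewrite_comp Eab.
    + rewrite_comp Ph1. rewrite_comp Nu1. exact Ep1.
    + rewrite_comp Ph2. rewrite_comp Nu2. exact Ep2.
  - rewrite_comp Eab. rewrite_comp Ph1. rewrite_comp Ka. exact E11.
  - rewrite_comp Eab. rewrite_comp Ph2. rewrite_comp Kb. exact E22.
Qed.

Lemma rel_htpy_of_tcof (A B X : C) (j : Hom A B) (f g : Hom B X) :
  cof j -> we j -> f ∘ j = g ∘ j -> rel_htpy j f g.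
Proof.
  intros Hj Wj E. destruct (rel_cylinder_exists Hj) as [Q [I [q1 [q2 [c [p Hr]]]]]].
  pose proof Hr as [Hq [Hc [Hp [Ep1 Ep2]]]].
  destruct (pushout_tcof Hj Wj Hq) as [_ Wq2].
  assert (Wc : we c).
  { apply (we_of_comp_l (f := q2)); auto. apply (we_section (p := p)); auto. }
  destruct (tcof_retract Hc Wc) as [r Er].
  destruct (pushout_desc (h1 := f) (h2 := g) Hq E) as [G [G1 G2]].
  apply (rel_htpy_of_cylinder (H := G ∘ r) Hr); rewrite_comp Er; assumption.
Qed.

End RelativeHomotopy.

Section Homotopy.
Variable C : CylCat.

Lemma htpy_of_rel_htpy (A B X : C) (i : Hom A B) (f g : Hom B X) : rel_htpy i f g -> htpy f g.
Proof.
  intros H. unfold htpy.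
  assert (E : idm B ∘ init B = i ∘ init A) by apply init_hom_eq.
  pose proof (rel_htpy_precomp (init_cof B) E H) as K. rewrite !comp_id_r in K. exact K.
Qed.

Lemma htpy_precomp (B B' X : C) (u : Hom B' B) (f g : Hom B X) :
  htpy f g -> htpy (f ∘ u) (g ∘ u).
Proof. intros H. exact (rel_htpy_precomp (a := idm zero) (init_cof _) (init_hom_eq _ _) H). Qed.

Global Instance htpy_equivalence_rel (B X : C) : Equivalence (@htpy C B X).
Proof.
  split.
  - intros f. apply rel_htpy_refl, init_cof.
  - intros f g. apply rel_htpy_sym.
  - intros f g h. apply rel_htpy_trans, init_cof.
Qed.

Global Instance comp_htpy_proper (X Y Z : C) :
  Proper (htpy ==> htpy ==> htpy) (@comp (ccat C) X Y Z).
Proof.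
  intros g g' Hg f f' Hf. transitivity (g' ∘ f).
  - apply htpy_precomp; auto.
  - apply rel_htpy_postcomp; auto.
Qed.

Lemma we_htpy (X Y : C) (f f' : Hom X Y) : htpy f f' -> we f -> we f'.
Proof.
  intros [Q [q1 [q2 [I [c [p [H [Hq [Hc [Hp [Ep1 [Ep2 [Ef Eg]]]]]]]]]]]]] Wf.
  assert (W1 : we (c ∘ q1)) by exact (we_section Ep1 Hp).
  assert (W2 : we (c ∘ q2)) by exact (we_section Ep2 Hp).
  assert (WH : we H) by (apply (we_of_comp_l (f := c ∘ q1)); auto; rewrite Ef; auto).
  rewrite <- Eg. apply we_comp; auto.
Qed.

Definition htpy_equiv (X Y : C) (w : Hom X Y) : Prop :=
  exists g : Hom Y X, htpy (g ∘ w) (idm X) /\ htpy (w ∘ g) (idm Y).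

Lemma htpy_equiv_of_we (X Y : C) (w : Hom X Y) : we w -> htpy_equiv w.
Proof.
  intros Ww.
  destruct (mapping_cylinder_factorization w) as [M [j [p [t [Hj [Wp [Ew [Ht [Wt Et]]]]]]]]].
  assert (Wj : we j) by (apply (we_of_comp_r (g := p)); auto; rewrite Ew; auto).
  destruct (tcof_retract Hj Wj) as [r Er].
  assert (Htp : htpy (t ∘ p) (idm M)).
  { apply (htpy_of_rel_htpy (i := t)). apply rel_htpy_of_tcof; auto.
    rewrite_comp Et. reflexivity. }
  assert (Hjr : htpy (j ∘ r) (idm M)).
  { apply (htpy_of_rel_htpy (i := j)). apply rel_htpy_of_tcof; auto.
    rewrite_comp Er. reflexivity. }
  exists (r ∘ t). subst w. split.
  - rewrite (comp_assoc j p (r ∘ t)), <- (comp_assoc p t r), Htp, comp_id_r, Er.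
    reflexivity.
  - rewrite <- (comp_assoc (r ∘ t) j p), (comp_assoc t r j), Hjr, comp_id_l, Et.
    reflexivity.
Qed.

Lemma we_of_htpy_equiv (X Y : C) (w : Hom X Y) : htpy_equiv w -> we w.
Proof.
  intros [g [H1 H2]].
  assert (W1 : we (g ∘ w)) by (symmetry in H1; apply (we_htpy H1), we_id).
  assert (W2 : we (w ∘ g)) by (symmetry in H2; apply (we_htpy H2), we_id).
  apply (we_2of6 W2 W1).
Qed.

(* Glue the homotopy [H] from [f ∘ j] to [g] onto [f] along [j], and push it to its other end
   through a retraction. *)
Lemma we_homotopy_extension (A B X : C) (j : Hom A B) (f : Hom B X) (g : Hom A X) :
  cof j -> htpy (f ∘ j) g -> we f -> exists f' : Hom B X, f' ∘ j = g /\ we f'.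
Proof.
  intros Hj [Q [q1 [q2 [I [c [p [H [Hq [Hc [Hp [Ep1 [Ep2 [Ef Eg]]]]]]]]]]]]] Wf.
  assert (C1 : cof (c ∘ q1)) by (apply cof_comp; auto; exact (pushout_cof_l (init_cof _) Hq)).
  assert (W1 : we (c ∘ q1)) by exact (we_section Ep1 Hp).
  destruct (pushout_exists j C1) as [N [tau [sig Hn]]].
  destruct (pushout_tcof C1 W1 Hn) as [_ Wsig].
  destruct (pushout_exists (tau ∘ (c ∘ q2)) Hj) as [N1 [sig2 [nu Hn1]]].
  pose proof (pushout_cof Hj Hn1) as Hnu.
  destruct (pushout_desc (h1 := j ∘ p) (h2 := idm B) Hn) as [pi0 [P01 P02]].
  { rewrite_comp Ep1. reflexivity. }
  destruct (pushout_desc (h1 := idm B) (h2 := pi0) Hn1) as [pi1 [P11 P12]].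
  { rewrite_comp P01. rewrite_comp Ep2. reflexivity. }
  destruct (factorization pi1) as [IB [mu [piB [Hmu [WpiB Emu]]]]].
  assert (Wzs : we (mu ∘ (nu ∘ sig))).
  { apply (we_section (p := piB)); auto. rewrite_comp Emu. rewrite_comp P12. exact P02. }
  assert (Wz : we (mu ∘ nu)).
  { apply (we_of_comp_l (f := sig)); auto. rewrite <- comp_assoc; auto. }
  destruct (tcof_retract (cof_comp Hnu Hmu) Wz) as [r Er].
  destruct (pushout_desc (h1 := H) (h2 := f) Hn) as [G0 [G01 G02]].
  { rewrite Ef. reflexivity. }
  exists (G0 ∘ (r ∘ (mu ∘ sig2))). split.
  - assoc_r. rewrite_comp (pushout_commutes Hn1). rewrite_comp Er. rewrite_comp G01. exact Eg.
  - assert (WG : we (G0 ∘ r)).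
    { apply (we_of_comp_l (f := mu ∘ (nu ∘ sig))); auto. rewrite_comp Er. rewrite G02. auto. }
    assert (Wm : we (mu ∘ sig2)).
    { apply (we_section (p := piB)); auto. rewrite_comp Emu. exact P11. }
    rewrite comp_assoc. apply we_comp; auto.
Qed.

End Homotopy.

Section Morphism.
Variables C D : CylCat.
Variable F : CylMor C D.

Definition htpy_full : Prop :=
  forall (B X : C) (v : Hom (F B) (F X)), exists u : Hom B X, htpy (Fh F u) v.

Definition htpy_faithful : Prop :=
  forall (B X : C) (u u' : Hom B X), htpy (Fh F u) (Fh F u') -> htpy u u'.

Lemma F_init_hom_eq (Y : D) (f g : Hom (F zero) Y) : f = g.
Proof.
  destruct (F_init F Y) as [u [_ Hu]].
  rewrite <- (Hu f I), <- (Hu g I). reflexivity.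
Qed.

Definition F_zero_to_zero : Hom (F zero) (@zero D) :=
  proj1_sig (constructive_indefinite_description _ (F_init F zero)).

Lemma cof_F_zero_to_zero : cof F_zero_to_zero.
Proof.
  apply cof_iso. exists (init (F zero)).
  split; [apply F_init_hom_eq | apply init_hom_eq].
Qed.

Lemma F_rel_cylinder (A B Q I : C) (i : Hom A B) (q1 q2 : Hom B Q) (c : Hom Q I)
    (p : Hom I B) :
  cof i -> rel_cylinder i q1 q2 c p ->
  rel_cylinder (Fh F i) (Fh F q1) (Fh F q2) (Fh F c) (Fh F p).
Proof.
  intros Hi [Hq [Hc [Hp [E1 E2]]]].
  refine (conj (F_pushout F Hi Hq) (conj (F_cof F Hc) (conj (F_we F Hp) (conj _ _))));
    rewrite <- !F_comp; [rewrite E1 | rewrite E2]; apply F_id.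
Qed.

Lemma F_rel_htpy (A B X : C) (i : Hom A B) (f g : Hom B X) : cof i -> rel_htpy i f g ->
  rel_htpy (Fh F i) (Fh F f) (Fh F g).
Proof.
  intros Hi [Q [q1 [q2 [I [c [p [H [Hq [Hc [Hp [Ep1 [Ep2 [Ef Eg]]]]]]]]]]]]].
  assert (R : rel_cylinder i q1 q2 c p) by (repeat split; auto; apply Hq).
  apply (rel_htpy_of_cylinder (H := Fh F H) (F_rel_cylinder Hi R)); rewrite <- !F_comp;
    congruence.
Qed.

Lemma F_htpy (B X : C) (f g : Hom B X) : htpy f g -> htpy (Fh F f) (Fh F g).
Proof.
  intros H. apply (htpy_of_rel_htpy (i := Fh F (init B))). apply F_rel_htpy; auto.
  apply init_cof.
Qed.

Global Instance Fh_htpy_proper (X Y : C) : Proper (htpy ==> htpy) (@Fh C D F X Y).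
Proof. intros f g H. apply F_htpy; auto. Qed.

Lemma htpy_full_of_hff : homotopy_fully_faithful F -> htpy_full.
Proof.
  intros Hff B X v.
  destruct (Hff zero B X (init B) (init X) v (init_cof B) (F_init_hom_eq _ _)) as [u [_ Hu]].
  exists u. exact (htpy_of_rel_htpy Hu).
Qed.

(* A homotopy [F u ~ F u'] is transported to the image of a cylinder of [B]; lifting the
   resulting map out of [F I] relative to [F (B ⊔ B)] gives a homotopy [u ~ u']. *)
Lemma htpy_faithful_of_hff : homotopy_fully_faithful F -> htpy_faithful.
Proof.
  intros Hff B X u u' Hu.
  destruct (rel_cylinder_exists (init_cof B)) as [Q [I [q1 [q2 [c [p R]]]]]].
  assert (E0 : idm (F B) ∘ Fh F (init B) = init (F B) ∘ F_zero_to_zero)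
    by apply F_init_hom_eq.
  destruct (rel_htpy_transport E0 Hu (F_rel_cylinder (init_cof B) R)) as [H' [E1 E2]].
  rewrite comp_id_r in E1, E2.
  pose proof R as [Hq [Hc _]].
  destruct (pushout_desc (h1 := u) (h2 := u') Hq (init_hom_eq _ _)) as [G [G1 G2]].
  assert (EH : H' ∘ Fh F c = Fh F G).
  { apply (pushout_hom_ext (F_pushout F (init_cof B) Hq)).
    - rewrite <- comp_assoc, E1, <- F_comp, G1. reflexivity.
    - rewrite <- comp_assoc, E2, <- F_comp, G2. reflexivity. }
  destruct (Hff _ _ _ c G H' Hc EH) as [v' [Ev' _]].
  apply (rel_htpy_of_cylinder (H := v') R); rewrite_comp Ev'; assumption.
Qed.

Lemma detects_we_of_full_faithful : htpy_full -> htpy_faithful -> detects_we F.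
Proof.
  intros Hfu Hfa X Y v. split; [apply F_we|]. intros Wv.
  destruct (htpy_equiv_of_we Wv) as [gb [H1 H2]].
  destruct (Hfu _ _ gb) as [g Hg].
  apply we_of_htpy_equiv. exists g.
  split; apply Hfa; rewrite F_comp, F_id, Hg; assumption.
Qed.

Lemma slice_homotopy_surjective_of_full :
  homotopy_surjective F -> htpy_full -> forall A : C, slice_homotopy_surjective F A.
Proof.
  intros Hs Hfu A Dd j Hj.
  destruct (Hs Dd) as [C0 [w0 Ww0]].
  destruct (Hfu _ _ (w0 ∘ j)) as [v' Hv'].
  destruct (factorization v') as [B [i [p [Hi [Wp Ep]]]]].
  destruct (htpy_equiv_of_we Wp) as [t [Ht1 Ht2]].
  assert (Wt : we t) by (apply we_of_htpy_equiv; exists p; split; auto).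
  assert (Wf : we (Fh F t ∘ w0)) by (apply we_comp; auto; apply F_we; auto).
  destruct (we_homotopy_extension (j := j) (f := Fh F t ∘ w0) (g := Fh F i) Hj)
    as [w [Ew Ww]]; auto.
  - rewrite <- comp_assoc, <- Hv', <- F_comp, <- Ep.
    apply F_htpy. rewrite (comp_assoc i p t), Ht1, comp_id_l. reflexivity.
  - exists B, i. split; auto. exists w. auto.
Qed.

Lemma homotopy_surjective_of_slice :
  (forall A : C, slice_homotopy_surjective F A) -> homotopy_surjective F.
Proof.
  intros Hs Dd.
  destruct (Hs zero Dd (init Dd ∘ F_zero_to_zero) (cof_comp cof_F_zero_to_zero (init_cof _)))
    as [B [i [_ [w [Ww _]]]]].
  exists B, w. exact Ww.
Qed.

(* Factor [(v, id) : F (B ⊔_A X) -> F X] as [q ∘ k] and realise the cofibration [k] up to weak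
   equivalence by some [B ⊔_A X >-> B'].  Detection makes [X -> B'] a trivial cofibration, and
   its retraction restricted to [B] is the lift. *)
Lemma hff_of_detects_we_slice :
  detects_we F -> (forall A : C, slice_homotopy_surjective F A) -> homotopy_fully_faithful F.
Proof.
  intros Hd Hs A B X i x v Hi Ev.
  destruct (pushout_exists x Hi) as [P [iB [iX Hp]]].
  pose proof (F_pushout F Hi Hp) as FP.
  pose proof (pushout_cof Hi Hp) as HiX.
  destruct (pushout_desc (h1 := v) (h2 := idm (F X)) FP) as [r [R1 R2]].
  { rewrite Ev, comp_id_l. reflexivity. }
  destruct (factorization r) as [E [k [q [Hk [Wq Eq]]]]].
  destruct (Hs P E k Hk) as [B' [i' [Hi' [w [Ww Ew]]]]].
  assert (Ws : we (k ∘ Fh F iX)).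
  { apply (we_section (p := q)); auto. rewrite_comp Eq. exact R2. }
  assert (Ft : Fh F (i' ∘ iX) = w ∘ (k ∘ Fh F iX)).
  { rewrite F_comp, <- Ew. assoc_r. reflexivity. }
  assert (Wt : we (i' ∘ iX)) by (apply Hd; rewrite Ft; apply we_comp; auto).
  destruct (tcof_retract (cof_comp HiX Hi') Wt) as [rho Er].
  exists (rho ∘ (i' ∘ iB)). split.
  - rewrite_comp (pushout_commutes Hp). rewrite_comp Er. reflexivity.
  - assert (Cs : cof (k ∘ Fh F iX)) by (apply cof_comp; auto; apply F_cof; auto).
    assert (T : rel_htpy (k ∘ Fh F iX) (Fh F rho ∘ w) q).
    { apply rel_htpy_of_tcof; auto. assoc_r.
      rewrite <- Ft, <- F_comp, Er, F_id. rewrite_comp Eq. exact (eq_sym R2). }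
    assert (Ek : k ∘ Fh F iB ∘ Fh F i = k ∘ Fh F iX ∘ Fh F x).
    { assoc_r. rewrite <- !F_comp, (pushout_commutes Hp). reflexivity. }
    pose proof (rel_htpy_precomp (F_cof F Hi) Ek T) as K.
    replace (Fh F (rho ∘ (i' ∘ iB))) with (Fh F rho ∘ w ∘ (k ∘ Fh F iB)).
    + replace v with (q ∘ (k ∘ Fh F iB)); [exact K|]. rewrite_comp Eq. exact R1.
    + rewrite !F_comp. assoc_r. rewrite_comp Ew. reflexivity.
Qed.

Lemma acyclic_of_full_faithful :
  homotopy_surjective F -> htpy_full -> htpy_faithful -> acyclic F.
Proof.
  intros Hs Hfu Hfa. split; [exact Hs|].
  apply hff_of_detects_we_slice.
  - exact (detects_we_of_full_faithful Hfu Hfa).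
  - exact (slice_homotopy_surjective_of_full Hs Hfu).
Qed.

Lemma acyclic_iff_detects_we_slice :
  acyclic F <-> (detects_we F /\ forall A : C, slice_homotopy_surjective F A).
Proof.
  split.
  - intros [Hs Hff]. split.
    + exact (detects_we_of_full_faithful (htpy_full_of_hff Hff) (htpy_faithful_of_hff Hff)).
    + exact (slice_homotopy_surjective_of_full Hs (htpy_full_of_hff Hff)).
  - intros [Hd Hsl].
    exact (conj (homotopy_surjective_of_slice Hsl) (hff_of_detects_we_slice Hd Hsl)).
Qed.

End Morphism.

Lemma dependent_choice {A : Type} {B : A -> Type} (P : forall a, B a -> Prop) :
  (forall a, exists b, P a b) -> exists f : forall a, B a, forall a, P a (f a).
Proof.
  intros H. exists (fun a => proj1_sig (constructive_indefinite_description _ (H a))).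
  intros a. exact (proj2_sig (constructive_indefinite_description _ (H a))).
Qed.

Section HomotopyCategoryEquivalence.
Variables C D : CylCat.
Variable F : CylMor C D.

Lemma full_faithful_of_hequiv_hF : @hequiv (hCat C) (hCat D) (Fo F) (hF F) ->
  homotopy_surjective F /\ htpy_full F /\ htpy_faithful F.
Proof.
  intros [Go [Gh [eta [eta' [eps [eps' [P1 [P2 [P3 [P4 [P5 [P6 [P7 [P8 P9]]]]]]]]]]]]]].
  cbn in *.
  assert (Gfaith : forall (Y Y' : D) (g g' : Hom Y Y'), htpy (Gh _ _ g) (Gh _ _ g') -> htpy g g').
  { intros Y Y' g g' Hg.
    transitivity (g ∘ (eps Y ∘ eps' Y)); [rewrite P9, comp_id_r; reflexivity|].
    rewrite comp_assoc, P7, Hg, <- P7, <- comp_assoc, P9, comp_id_r. reflexivity. }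
  split; [|split].
  - intros Y. exists (Go Y), (eps' Y). apply we_of_htpy_equiv. exists (eps Y). auto.
  - intros B X v. exists (eta' X ∘ (Gh _ _ v ∘ eta B)). apply Gfaith.
    transitivity (Gh _ _ (Fh F (eta' X ∘ (Gh _ _ v ∘ eta B))) ∘ (eta B ∘ eta' B)).
    { rewrite P6, comp_id_r. reflexivity. }
    rewrite comp_assoc, P4. assoc_r.
    rewrite (comp_assoc (Gh _ _ v ∘ (eta B ∘ eta' B)) (eta' X) (eta X)).
    rewrite P6, comp_id_l, P6, comp_id_r. reflexivity.
  - intros B X u u' Hu.
    transitivity (eta' X ∘ (eta X ∘ u)); [rewrite comp_assoc, P5, comp_id_l; reflexivity|].
    rewrite <- P4, (P1 _ _ _ _ Hu), P4, comp_assoc, P5, comp_id_l. reflexivity.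
Qed.

(* A quasi-inverse of [hF]: [G Y] is any [C]-object with a weak equivalence [w Y : Y -> F (G Y)],
   and on morphisms and units [G] is given by fullness. *)
Lemma hF_quasi_inverse_data : homotopy_surjective F -> htpy_full F ->
  exists (Go : D -> C) (w : forall Y, Hom Y (F (Go Y))) (wb : forall Y, Hom (F (Go Y)) Y)
         (Gh : forall Y Y', Hom Y Y' -> Hom (Go Y) (Go Y'))
         (eta : forall X, Hom X (Go (F X))) (eta' : forall X, Hom (Go (F X)) X),
    (forall Y, htpy (wb Y ∘ w Y) (idm Y)) /\ (forall Y, htpy (w Y ∘ wb Y) (idm _)) /\
    (forall Y Y' (g : Hom Y Y'), htpy (Fh F (Gh Y Y' g)) (w Y' ∘ (g ∘ wb Y))) /\
    (forall X, htpy (Fh F (eta X)) (w (F X))) /\ (forall X, htpy (Fh F (eta' X)) (wb (F X))).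
Proof.
  intros Hs Hfu.
  destruct (@dependent_choice D (fun Y => {X : C & Hom Y (F X)}) (fun Y p => we (projT2 p)))
    as [G0 HG0].
  { intros Y. destruct (Hs Y) as [X [w Hw]]. exists (existT _ X w). exact Hw. }
  set (Go := fun Y => projT1 (G0 Y)).
  set (w := fun Y => projT2 (G0 Y) : Hom Y (F (Go Y))).
  destruct (@dependent_choice D (fun Y => Hom (F (Go Y)) Y)
     (fun Y g => htpy (g ∘ w Y) (idm Y) /\ htpy (w Y ∘ g) (idm (F (Go Y))))) as [wb Hwb].
  { intros Y. exact (htpy_equiv_of_we (HG0 Y)). }
  destruct (@dependent_choice {Y : D & {Y' : D & Hom Y Y'}}
     (fun t => Hom (Go (projT1 t)) (Go (projT1 (projT2 t))))
     (fun t u => htpy (Fh F u) (w (projT1 (projT2 t)) ∘ (projT2 (projT2 t) ∘ wb (projT1 t)))))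
    as [Gh0 HGh].
  { intros t. apply Hfu. }
  destruct (@dependent_choice C (fun X => Hom X (Go (F X))) (fun X u => htpy (Fh F u) (w (F X))))
    as [eta Heta].
  { intros X. apply Hfu. }
  destruct (@dependent_choice C (fun X => Hom (Go (F X)) X) (fun X u => htpy (Fh F u) (wb (F X))))
    as [eta' Heta'].
  { intros X. apply Hfu. }
  exists Go, w, wb, (fun Y Y' g => Gh0 (existT _ Y (existT _ Y' g))), eta, eta'.
  repeat split; auto; intros; [apply Hwb | apply Hwb | apply (HGh (existT _ Y (existT _ Y' g)))].
Qed.

Lemma hequiv_hF_of_full_faithful : homotopy_surjective F -> htpy_full F -> htpy_faithful F ->
  @hequiv (hCat C) (hCat D) (Fo F) (hF F).
Proof.
  intros Hs Hfu Hfa.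
  destruct (hF_quasi_inverse_data Hs Hfu)
    as [Go [w [wb [Gh [eta [eta' [Hwbw [Hwwb [HG [Heta Heta']]]]]]]]]].
  assert (Hwbw_l : forall X Y (f : Hom X Y), htpy (wb Y ∘ (w Y ∘ f)) f).
  { intros X Y f. rewrite comp_assoc, Hwbw, comp_id_l. reflexivity. }
  exists Go, Gh, eta, eta', wb, w. cbn.
  repeat split.
  - intros Y Y' g g' Hg. apply Hfa. rewrite !HG, Hg. reflexivity.
  - intros X Y Z g f. apply Hfa. rewrite F_comp, !HG. assoc_r. rewrite Hwbw_l. reflexivity.
  - intros X. apply Hfa. rewrite HG, F_id, comp_id_l. apply Hwwb.
  - intros X Y f. apply Hfa. rewrite !F_comp, HG, !Heta. assoc_r.
    rewrite Hwbw, comp_id_r. reflexivity.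
  - intros X. apply Hfa. rewrite F_comp, Heta, Heta', F_id. apply Hwbw.
  - intros X. apply Hfa. rewrite F_comp, Heta, Heta', F_id. apply Hwwb.
  - intros X Y g. rewrite HG. assoc_r. rewrite Hwbw_l. reflexivity.
  - intros Y. apply Hwwb.
  - intros Y. apply Hwbw.
Qed.

Lemma acyclic_iff_hequiv : acyclic F <-> @hequiv (hCat C) (hCat D) (Fo F) (hF F).
Proof.
  split.
  - intros [Hs Hff].
    exact (hequiv_hF_of_full_faithful Hs (htpy_full_of_hff Hff) (htpy_faithful_of_hff Hff)).
  - intros H. destruct (full_faithful_of_hequiv_hF H) as [Hs [Hfu Hfa]].
    exact (acyclic_of_full_faithful Hs Hfu Hfa).
Qed.

End HomotopyCategoryEquivalence.

Section Slice.
Variable C : CylCat.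
Variable A : C.

Definition ustr (X : uobj A) : Hom A (projT1 X) := proj1_sig (projT2 X).
Definition ustr_cof (X : uobj A) : cof (ustr X) := proj2_sig (projT2 X).
Definition mk_uobj (B : C) (b : Hom A B) (H : cof b) : uobj A := existT _ B (exist _ b H).
Definition mk_uhom (X Y : uobj A) (u : Hom (projT1 X) (projT1 Y)) (E : u ∘ ustr X = ustr Y) :
  uhom X Y := exist _ u E.
Definition uval {X Y : uobj A} (f : uhom X Y) : Hom (projT1 X) (projT1 Y) := proj1_sig f.
Definition uval_comm {X Y : uobj A} (f : uhom X Y) : uval f ∘ ustr X = ustr Y := proj2_sig f.

Lemma uhom_ext (X Y : uobj A) (f g : uhom X Y) : uval f = uval g -> f = g.
Proof.
  destruct f as [f Hf], g as [g Hg]. unfold uval; simpl. intros ->. f_equal.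
  apply proof_irrelevance.
Qed.

Lemma ucomp_assoc (W X Y Z : uobj A) (h : uhom W X) (g : uhom X Y) (f : uhom Y Z) :
  ucomp f (ucomp g h) = ucomp (ucomp f g) h.
Proof. apply uhom_ext, comp_assoc. Qed.

Lemma ucomp_id_l (X Y : uobj A) (f : uhom X Y) : ucomp (uid Y) f = f.
Proof. apply uhom_ext, comp_id_l. Qed.

Lemma ucomp_id_r (X Y : uobj A) (f : uhom X Y) : ucomp f (uid X) = f.
Proof. apply uhom_ext, comp_id_r. Qed.

Definition slice_cat : Cat :=
  {| Ob := uobj A; Hom := @uhom C A; comp := @ucomp C A; idm := @uid C A;
     comp_assoc := ucomp_assoc; comp_id_l := ucomp_id_l; comp_id_r := ucomp_id_r |}.

Lemma slice_pushout (X1 XB XB' XP : uobj A) (i : uhom X1 XB) (f : uhom X1 XB')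
    (p1 : uhom XB XP) (p2 : uhom XB' XP) :
  is_pushout (uval i) (uval f) (uval p1) (uval p2) -> @is_pushout slice_cat _ _ _ _ i f p1 p2.
Proof.
  intros H. split.
  - apply uhom_ext. exact (pushout_commutes H).
  - intros Z h1 h2 E. apply (f_equal uval) in E.
    destruct H as [_ U]. destruct (U _ (uval h1) (uval h2) E) as [h [[H1 H2] Hu]].
    assert (Eh : h ∘ ustr XP = ustr Z).
    { rewrite <- (uval_comm p2). rewrite_comp H2. apply uval_comm. }
    exists (@mk_uhom XP Z h Eh). split.
    + split; apply uhom_ext; assumption.
    + intros h' [K1 K2]. apply uhom_ext, Hu.
      split; [apply (f_equal uval) in K1 | apply (f_equal uval) in K2]; assumption.
Qed.

Lemma slice_pushout_exists_compat (X1 XB XB' : uobj A) (i : uhom X1 XB) (f : uhom X1 XB') :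
  cof (uval i) -> exists (XP : uobj A) (p1 : uhom XB XP) (p2 : uhom XB' XP),
    @is_pushout slice_cat _ _ _ _ i f p1 p2 /\ is_pushout (uval i) (uval f) (uval p1) (uval p2).
Proof.
  intros Hi. destruct (pushout_exists (uval f) Hi) as [P [q1 [q2 Hq]]].
  set (XP := mk_uobj (cof_comp (ustr_cof XB') (pushout_cof Hi Hq))).
  assert (E1 : q1 ∘ ustr XB = ustr XP).
  { unfold XP, mk_uobj, ustr at 2; simpl. rewrite <- (uval_comm i), <- (uval_comm f).
    rewrite_comp (pushout_commutes Hq). reflexivity. }
  exists XP, (@mk_uhom XB XP q1 E1), (@mk_uhom XB' XP q2 eq_refl).
  split; [apply slice_pushout|]; exact Hq.
Qed.

Lemma pushout_of_slice_pushout (X1 XB XB' XP : uobj A) (i : uhom X1 XB) (f : uhom X1 XB')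
    (p1 : uhom XB XP) (p2 : uhom XB' XP) :
  cof (uval i) -> @is_pushout slice_cat _ _ _ _ i f p1 p2 ->
  is_pushout (uval i) (uval f) (uval p1) (uval p2).
Proof.
  intros Hi H. destruct (slice_pushout_exists_compat f Hi) as [XP' [q1 [q2 [Hs Hq]]]].
  destruct (pushout_unique_iso Hs H) as [phi [F1 [F2 [psi [I1 I2]]]]].
  apply (f_equal uval) in F1, F2, I1, I2.
  rewrite <- F1, <- F2. apply pushout_comp_iso; auto. exists (uval psi). auto.
Qed.

Definition slice_cof (X Y : slice_cat) (f : Hom X Y) : Prop := cof (uval f).
Definition slice_we (X Y : slice_cat) (f : Hom X Y) : Prop := we (uval f).

Lemma slice_iso (X Y : slice_cat) (f : Hom X Y) : is_iso f -> is_iso (uval f).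
Proof.
  intros [g [E1 E2]]. apply (f_equal uval) in E1, E2. exists (uval g). auto.
Qed.

Lemma slice_cof_iso (X Y : slice_cat) (f : Hom X Y) : is_iso f -> slice_cof f.
Proof. intros H. apply cof_iso, slice_iso, H. Qed.

Lemma slice_we_iso (X Y : slice_cat) (f : Hom X Y) : is_iso f -> slice_we f.
Proof. intros H. apply we_iso, slice_iso, H. Qed.

Lemma slice_cof_comp (X Y Z : slice_cat) (g : Hom Y Z) (f : Hom X Y) :
  slice_cof f -> slice_cof g -> slice_cof (comp g f).
Proof. apply cof_comp. Qed.

Lemma slice_we_comp (X Y Z : slice_cat) (g : Hom Y Z) (f : Hom X Y) :
  slice_we f -> slice_we g -> slice_we (comp g f).
Proof. apply we_comp. Qed.

Lemma slice_we_2of6 (W X Y Z : slice_cat) (h : Hom W X) (g : Hom X Y) (f : Hom Y Z) :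
  slice_we (comp f g) -> slice_we (comp g h) ->
  slice_we f /\ slice_we g /\ slice_we h /\ slice_we (comp f (comp g h)).
Proof. apply we_2of6. Qed.

Definition slice_zero : slice_cat := mk_uobj (cof_id A).

Definition slice_init (X : slice_cat) : Hom slice_zero X :=
  @mk_uhom slice_zero X (ustr X) (comp_id_r _).

Lemma slice_init_unique (X : slice_cat) (f : Hom slice_zero X) : f = slice_init X.
Proof. apply uhom_ext. simpl. rewrite <- (uval_comm f). symmetry. apply comp_id_r. Qed.

Lemma slice_init_cof (X : slice_cat) : slice_cof (slice_init X).
Proof. apply ustr_cof. Qed.

Lemma slice_pushout_exists (A1 B B' : slice_cat) (i : Hom A1 B) (f : Hom A1 B') :
  slice_cof i -> exists (P : slice_cat) (p1 : Hom B P) (p2 : Hom B' P), is_pushout i f p1 p2.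
Proof.
  intros Hi. destruct (slice_pushout_exists_compat f Hi) as [P [p1 [p2 [H _]]]].
  exists P, p1, p2. exact H.
Qed.

Lemma slice_pushout_cof (A1 B B' P : slice_cat) (i : Hom A1 B) (f : Hom A1 B') (p1 : Hom B P)
    (p2 : Hom B' P) :
  slice_cof i -> is_pushout i f p1 p2 -> slice_cof p2.
Proof. intros Hi H. exact (pushout_cof Hi (pushout_of_slice_pushout Hi H)). Qed.

Lemma slice_pushout_tcof (A1 B B' P : slice_cat) (i : Hom A1 B) (f : Hom A1 B')
    (p1 : Hom B P) (p2 : Hom B' P) :
  slice_cof i -> slice_we i -> is_pushout i f p1 p2 -> slice_cof p2 /\ slice_we p2.
Proof. intros Hi Wi H. exact (pushout_tcof Hi Wi (pushout_of_slice_pushout Hi H)). Qed.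

Lemma slice_cylinder (X S : slice_cat) (i1 i2 : Hom X S) :
  is_pushout (slice_init X) (slice_init X) i1 i2 ->
  exists (I : slice_cat) (c : Hom S I) (p : Hom I X),
    slice_cof c /\ slice_we p /\ comp p (comp c i1) = idm X /\ comp p (comp c i2) = idm X.
Proof.
  intros H. pose proof (pushout_of_slice_pushout (slice_init_cof X) H) as Hc.
  destruct (pushout_desc (h1 := idm (projT1 X)) (h2 := idm (projT1 X)) Hc eq_refl)
    as [d [D1 D2]].
  destruct (factorization d) as [I [c [p [Hcc [Wp Ed]]]]].
  set (XI := mk_uobj (cof_comp (ustr_cof S) Hcc)).
  assert (Ep : p ∘ ustr XI = ustr X).
  { unfold XI, mk_uobj, ustr at 1; simpl. rewrite <- (uval_comm i1).
    rewrite_comp Ed. rewrite_comp D1. reflexivity. }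
  exists XI, (@mk_uhom S XI c eq_refl), (@mk_uhom XI X p Ep).
  split; [exact Hcc|split; [exact Wp|split]]; apply uhom_ext; simpl.
  - rewrite_comp Ed. exact D1.
  - rewrite_comp Ed. exact D2.
Qed.

Lemma slice_tcof_retract (A1 B : slice_cat) (j : Hom A1 B) : slice_cof j -> slice_we j ->
  exists r : Hom B A1, comp r j = idm A1.
Proof.
  intros Hj Wj. destruct (tcof_retract Hj Wj) as [r Er].
  assert (E : r ∘ ustr B = ustr A1) by (rewrite <- (uval_comm j); rewrite_comp Er; reflexivity).
  exists (@mk_uhom B A1 r E). apply uhom_ext. exact Er.
Qed.

Definition slice_cyl : CylCat :=
  {| ccat := slice_cat; cof := slice_cof; we := slice_we;
     cof_iso := slice_cof_iso; we_iso := slice_we_iso;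
     cof_comp := slice_cof_comp; we_comp := slice_we_comp; we_2of6 := slice_we_2of6;
     zero := slice_zero; init := slice_init; init_unique := slice_init_unique;
     init_cof := slice_init_cof; pushout_exists := slice_pushout_exists;
     pushout_cof := slice_pushout_cof; pushout_tcof := slice_pushout_tcof;
     cylinder := slice_cylinder; tcof_retract := slice_tcof_retract |}.

Lemma rel_htpy_of_slice_rel_htpy (X1 XB XX : uobj A) (i : uhom X1 XB) (f g : uhom XB XX) :
  cof (uval i) -> @rel_htpy slice_cyl _ _ _ i f g -> rel_htpy (uval i) (uval f) (uval g).
Proof.
  intros Hi [Q [q1 [q2 [I [c [p [H [Hq [Hc [Hp [E1 [E2 [Ef Eg]]]]]]]]]]]]].
  apply (f_equal uval) in E1, E2, Ef, Eg.
  exists (projT1 Q), (uval q1), (uval q2), (projT1 I), (uval c), (uval p), (uval H).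
  pose proof (pushout_of_slice_pushout Hi Hq) as Hq'. repeat split; auto; apply Hq'.
Qed.

(* A relative cylinder of [i] in [C] is one in [C(A)], under [A] through [B]. *)
Lemma slice_rel_htpy_of_rel_htpy (X1 XB XX : uobj A) (i : uhom X1 XB) (f g : uhom XB XX) :
  cof (uval i) -> rel_htpy (uval i) (uval f) (uval g) -> @rel_htpy slice_cyl _ _ _ i f g.
Proof.
  intros Hi [Q [q1 [q2 [I [c [p [H [Hq [Hc [Hp [E1 [E2 [Ef Eg]]]]]]]]]]]]].
  set (Qs := mk_uobj (cof_comp (ustr_cof XB) (pushout_cof_l Hi Hq))).
  assert (Eq2 : q2 ∘ ustr XB = ustr Qs).
  { change (ustr Qs) with (q1 ∘ ustr XB). rewrite <- (uval_comm i).
    rewrite_comp (pushout_commutes Hq). reflexivity. }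
  set (Is := mk_uobj (cof_comp (ustr_cof Qs) Hc)).
  assert (Ep : p ∘ ustr Is = ustr XB).
  { change (ustr Is) with (c ∘ (q1 ∘ ustr XB)). rewrite_comp E1. reflexivity. }
  assert (EH : H ∘ ustr Is = ustr XX).
  { change (ustr Is) with (c ∘ (q1 ∘ ustr XB)). rewrite_comp Ef. apply uval_comm. }
  exists Qs, (@mk_uhom XB Qs q1 eq_refl), (@mk_uhom XB Qs q2 Eq2), Is, (@mk_uhom Qs Is c eq_refl),
    (@mk_uhom Is XB p Ep), (@mk_uhom Is XX H EH).
  split; [apply slice_pushout; exact Hq|].
  split; [exact Hc|split; [exact Hp|]].
  repeat split; apply uhom_ext; assumption.
Qed.

Lemma slice_htpy_iff (X Y : uobj A) (f g : uhom X Y) :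
  rel_htpy (ustr X) (uval f) (uval g) <-> @htpy slice_cyl X Y f g.
Proof.
  split; intros H.
  - apply slice_rel_htpy_of_rel_htpy; [apply ustr_cof | exact H].
  - exact (rel_htpy_of_slice_rel_htpy (i := slice_init X) (ustr_cof X) H).
Qed.

End Slice.

Section SliceMorphism.
Variables C D : CylCat.
Variable F : CylMor C D.
Variable A : C.

Lemma F_slice_comp (X Y Z : slice_cyl A) (g : Hom Y Z) (f : Hom X Y) :
  FA_hom F (comp g f) = @comp (slice_cyl (F A)) _ _ _ (FA_hom F g) (FA_hom F f).
Proof. apply uhom_ext, F_comp. Qed.

Lemma F_slice_id (X : slice_cyl A) : FA_hom F (idm X) = @idm (slice_cyl (F A)) (FA_ob F X).
Proof. apply uhom_ext, F_id. Qed.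

Lemma F_slice_cof (X Y : slice_cyl A) (f : Hom X Y) :
  cof f -> @cof (slice_cyl (F A)) _ _ (FA_hom F f).
Proof. exact (F_cof F (f := uval f)). Qed.

Lemma F_slice_we (X Y : slice_cyl A) (f : Hom X Y) :
  we f -> @we (slice_cyl (F A)) _ _ (FA_hom F f).
Proof. exact (F_we F (f := uval f)). Qed.

Lemma F_slice_init : @is_initial (slice_cyl (F A)) (FA_ob F (@zero (slice_cyl A))).
Proof.
  intros Y. assert (E : ustr Y ∘ Fh F (idm A) = ustr Y) by (rewrite F_id, comp_id_r; auto).
  exists (@mk_uhom _ _ (FA_ob F (@zero (slice_cyl A))) Y (ustr Y) E). split; auto.
  intros f' _. apply uhom_ext. simpl. rewrite <- (uval_comm f').
  exact (eq_trans (f_equal (comp (uval f')) (F_id F A)) (comp_id_r _)).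
Qed.

Lemma F_slice_pushout (A1 B B' P : slice_cyl A) (i : Hom A1 B) (f : Hom A1 B') (p1 : Hom B P)
    (p2 : Hom B' P) :
  cof i -> is_pushout i f p1 p2 ->
  @is_pushout (slice_cyl (F A)) _ _ _ _ (FA_hom F i) (FA_hom F f) (FA_hom F p1) (FA_hom F p2).
Proof.
  intros Hi H. apply slice_pushout, F_pushout; [exact Hi|].
  exact (pushout_of_slice_pushout Hi H).
Qed.

Definition F_slice : CylMor (slice_cyl A) (slice_cyl (F A)) :=
  @Build_CylMor (slice_cyl A) (slice_cyl (F A)) (@FA_ob C D F A) (fun X Y u => FA_hom F u)
    F_slice_comp F_slice_id F_slice_cof F_slice_we F_slice_init F_slice_pushout.

Lemma acyclic_F_slice : acyclic F -> acyclic F_slice.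
Proof.
  intros Hac. pose proof Hac as [_ Hff].
  destruct (proj1 (acyclic_iff_detects_we_slice F) Hac) as [_ Hsl].
  split.
  - intros Dd.
    destruct (Hsl A (projT1 Dd) (ustr Dd) (ustr_cof Dd)) as [B [i [Hi [w [Ww Ew]]]]].
    exists (mk_uobj Hi), (@mk_uhom _ _ Dd (FA_ob F (mk_uobj Hi)) w Ew). exact Ww.
  - intros A1 B X i x v Hi Ev. apply (f_equal (@uval _ _ _ _)) in Ev.
    destruct (Hff _ _ _ (uval i) (uval x) (uval v) Hi Ev) as [v0 [E0 R0]].
    assert (E1 : v0 ∘ ustr B = ustr X).
    { rewrite <- (uval_comm i). rewrite_comp E0. apply uval_comm. }
    exists (@mk_uhom _ _ B X v0 E1). split.
    + apply uhom_ext. exact E0.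
    + apply slice_rel_htpy_of_rel_htpy; [exact (F_cof F Hi) | exact R0].
Qed.

End SliceMorphism.

(* [C(0)] is [C] itself, up to the choice of the (unique) maps out of [0]. *)
Lemma acyclic_of_F_slice_zero (C D : CylCat) (F : CylMor C D) :
  acyclic (F_slice F zero) -> acyclic F.
Proof.
  intros [Hs Hff]. split.
  - intros Dd. pose proof (cof_comp (cof_F_zero_to_zero F) (init_cof Dd)) as Hj.
    destruct (Hs (mk_uobj Hj)) as [X [w Ww]].
    exists (projT1 X), (uval w). exact Ww.
  - intros A B X i x v Hi Ev.
    set (iA := mk_uobj (init_cof A)). set (iB := mk_uobj (init_cof B)).
    set (iX := mk_uobj (init_cof X)).
    set (is := @mk_uhom _ _ iA iB i (init_hom_eq _ _)).
    set (xs := @mk_uhom _ _ iA iX x (init_hom_eq _ _)).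
    set (vs := @mk_uhom _ _ (FA_ob F iB) (FA_ob F iX) v (F_init_hom_eq _ _)).
    assert (Evs : @comp (slice_cyl (F zero)) _ _ _ vs (Fh (F_slice F zero) is)
                  = Fh (F_slice F zero) xs) by (apply uhom_ext; exact Ev).
    destruct (Hff iA iB iX is xs vs Hi Evs) as [v' [E' R']].
    exists (uval v'). split.
    + exact (f_equal (@uval _ _ _ _) E').
    + exact (rel_htpy_of_slice_rel_htpy (i := FA_hom F is) (F_cof F Hi) R').
Qed.

Lemma hequiv_congr (o1 o2 : Type) (h1 : o1 -> o1 -> Type) (h2 : o2 -> o2 -> Type)
    (c1 : forall X Y Z, h1 Y Z -> h1 X Y -> h1 X Z)
    (c2 : forall X Y Z, h2 Y Z -> h2 X Y -> h2 X Z)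
    (i1 : forall X, h1 X X) (i2 : forall X, h2 X X)
    (R1 R1' : forall X Y, h1 X Y -> h1 X Y -> Prop)
    (R2 R2' : forall X Y, h2 X Y -> h2 X Y -> Prop)
    (Fo : o1 -> o2) (Fh : forall X Y, h1 X Y -> h2 (Fo X) (Fo Y)) :
  (forall X Y f g, R1 X Y f g <-> R1' X Y f g) -> (forall X Y f g, R2 X Y f g <-> R2' X Y f g) ->
  @hequiv (Build_HPre c1 i1 R1) (Build_HPre c2 i2 R2) Fo Fh ->
  @hequiv (Build_HPre c1 i1 R1') (Build_HPre c2 i2 R2') Fo Fh.
Proof.
  intros E1 E2 [Go [Gh [eta [eta' [eps [eps' [P1 [P2 [P3 [P4 [P5 [P6 [P7 [P8 P9]]]]]]]]]]]]]].
  exists Go, Gh, eta, eta', eps, eps'. cbn in *.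
  repeat split; intros; apply E1 || apply E2; auto; apply P1, E2; assumption.
Qed.

(* [hSlice A] is [hCat (slice_cyl A)] up to the presentation of its homotopy relation. *)
Lemma hequiv_hSlice_iff (C D : CylCat) (F : CylMor C D) (A : C) :
  @hequiv (hSlice A) (hSlice (F A)) (@FA_ob C D F A) (@hFA C D F A) <->
  @hequiv (hCat (slice_cyl A)) (hCat (slice_cyl (F A))) (Fo (F_slice F A)) (hF (F_slice F A)).
Proof.
  split; apply hequiv_congr; intros;
    first [apply slice_htpy_iff | apply iff_sym, slice_htpy_iff].
Qed.

Theorem mainTheorem3 (C D : CylCat) (F : CylMor C D) :
  (acyclic F <-> (detects_we F /\ forall A : C, slice_homotopy_surjective F A)) /\
  (acyclic F <-> @hequiv (hCat C) (hCat D) (Fo F) (hF F)) /\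
  (acyclic F <-> forall A : C, @hequiv (hSlice A) (hSlice (F A)) (@FA_ob C D F A) (@hFA C D F A)).
Proof.
  split; [apply acyclic_iff_detects_we_slice|split; [apply acyclic_iff_hequiv|split]].
  - intros Hac A. apply hequiv_hSlice_iff, acyclic_iff_hequiv, acyclic_F_slice, Hac.
  - intros Hequiv. apply acyclic_of_F_slice_zero, acyclic_iff_hequiv, hequiv_hSlice_iff, Hequiv.
Qed.
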